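(* Let $F$ be a finitely generated free group and let $\phi : F \to F$ be an endomorphism (not necessarily injective). Then there exist a finitely generated free group $F_1$ and an injective endomorphism $\psi : F_1 \to F_1$ such that $M(\phi) \cong M(\psi)$.
   Context: For a group $G$ and an endomorphism $\phi : G \to G$ (not necessarily injective), the mapping torus group is $M(\phi) = \langle G, t \mid t^{-1} g t = \phi(g),\ g \in G \rangle$, i.e. the quotient of the free product $G * \langle t \rangle$ by the normal closure of all elements $t^{-1} g t\, \phi(g)^{-1}$, $g \in G$. *)

From mathcomp Require Import all_boot.
From Stdlib Require Import ClassicalEpsilon PropExtensionality
  FunctionalExtensionality ProofIrrelevance.

Set Implicit Arguments.
Unset Strict Implicit.
Unset Printing Implicit Defensive.

Record group := Group {
  gcar :> Type;
  gmul : gcar -> gcar -> gcar;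
  ginv : gcar -> gcar;
  gone : gcar;
  gmulA : forall x y z, gmul x (gmul y z) = gmul (gmul x y) z;
  gmul1 : forall x, gmul gone x = x;
  gmulV : forall x, gmul (ginv x) x = gone }.

Record hom (G H : group) := Hom {
  hfun :> G -> H;
  hmul : forall x y, hfun (gmul x y) = gmul (hfun x) (hfun y) }.

Definition isomorphic (G H : group) : Prop :=
  exists f : hom G H, bijective f.

Section Presentation.
Variable X : Type.

(* a letter (x, false) is the generator x, (x, true) is x^{-1} *)
Definition letter := (X * bool)%type.
Definition word := seq letter.
Definition flip (x : letter) : letter := (x.1, ~~ x.2).
Definition winv (w : word) : word := rev (map flip w).

Variable R : word -> word -> Prop.

Inductive weq : word -> word -> Prop :=
| weq_refl w : weq w w
| weq_sym u v : weq u v -> weq v u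
| weq_trans u v w : weq u v -> weq v w -> weq u w
| weq_cancel u x v : weq (u ++ x :: flip x :: v) (u ++ v)
| weq_rel u a b v : R a b -> weq (u ++ a ++ v) (u ++ b ++ v).

Lemma flipK x : flip (flip x) = x.
Proof. by case: x => a b; rewrite /flip /= negbK. Qed.

Lemma weq_ctx u v a b : weq a b -> weq (u ++ a ++ v) (u ++ b ++ v).
Proof.
elim=> [w|a' b' _ IH|a' b' c' _ IH1 _ IH2|u0 x v0|u0 a0 b0 v0 Hr].
- exact: weq_refl.
- exact: weq_sym.
- exact: weq_trans IH1 IH2.
- have -> : u ++ (u0 ++ x :: flip x :: v0) ++ v
            = (u ++ u0) ++ x :: flip x :: (v0 ++ v) by rewrite -!catA.
  have -> : u ++ (u0 ++ v0) ++ v = (u ++ u0) ++ (v0 ++ v) by rewrite -!catA.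
  exact: weq_cancel.
- have -> : u ++ (u0 ++ a0 ++ v0) ++ v = (u ++ u0) ++ a0 ++ (v0 ++ v)
    by rewrite -!catA.
  have -> : u ++ (u0 ++ b0 ++ v0) ++ v = (u ++ u0) ++ b0 ++ (v0 ++ v)
    by rewrite -!catA.
  exact: weq_rel.
Qed.

Lemma winv_cancel w : weq (winv w ++ w) [::].
Proof.
elim: w => [|x w IH] /=; first exact: weq_refl.
have -> : winv (x :: w) ++ x :: w = winv w ++ flip x :: flip (flip x) :: w.
  by rewrite /winv /= rev_cons -cats1 -catA flipK.
exact: weq_trans (weq_cancel _ _ _) IH.
Qed.

Definition pres := {P : word -> Prop | exists w, P = weq w}.
Definition cls (w : word) : pres := exist _ (weq w) (ex_intro _ w erefl).
Definition repr (A : pres) : word :=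
  proj1_sig (constructive_indefinite_description _ (proj2_sig A)).

Lemma eq_pres (A B : pres) : proj1_sig A = proj1_sig B -> A = B.
Proof.
case: A => P HP; case: B => Q HQ /= E; subst Q; f_equal; exact: proof_irrelevance.
Qed.

Lemma reprK A : cls (repr A) = A.
Proof.
apply: eq_pres; rewrite /repr.
case: (constructive_indefinite_description _ _) => w Hw /=.
by rewrite Hw.
Qed.

Lemma cls_eq u v : weq u v -> cls u = cls v.
Proof.
move=> H; apply: eq_pres => /=; apply: functional_extensionality => w.
apply: propositional_extensionality; split=> H'.
- exact: weq_trans (weq_sym H) H'.
- exact: weq_trans H H'.
Qed.

Lemma repr_cls w : weq (repr (cls w)) w.
Proof.
have E : proj1_sig (cls (repr (cls w))) = proj1_sig (cls w) by rewrite reprK.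
simpl in E; apply: weq_sym; rewrite -E; exact: weq_refl.
Qed.

Definition pmul (A B : pres) : pres := cls (repr A ++ repr B).
Definition pinv (A : pres) : pres := cls (winv (repr A)).
Definition pone : pres := cls [::].

Lemma pmul_cls u v : pmul (cls u) (cls v) = cls (u ++ v).
Proof.
apply: cls_eq; apply: weq_trans (_ : weq (u ++ repr (cls v)) _).
- exact: (weq_ctx [::] (repr (cls v)) (repr_cls u)).
- rewrite -[u ++ repr _]cats0 -[u ++ v]cats0 -!catA.
  exact: (weq_ctx u [::] (repr_cls v)).
Qed.

Lemma pmulA (A B C : pres) : pmul A (pmul B C) = pmul (pmul A B) C.
Proof.
rewrite -(reprK A) -(reprK B) -(reprK C) !pmul_cls; by rewrite catA.
Qed.

Lemma pmul1 (A : pres) : pmul pone A = A.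
Proof. by rewrite -(reprK A) /pone pmul_cls. Qed.

Lemma pmulV (A : pres) : pmul (pinv A) A = pone.
Proof.
rewrite /pinv -{2}(reprK A) pmul_cls; apply: cls_eq; exact: winv_cancel.
Qed.

Definition presented_group : group :=
  @Group pres pmul pinv pone pmulA pmul1 pmulV.

End Presentation.

Definition freegrp (n : nat) : group :=
  presented_group (fun _ _ : word 'I_n => False).

Definition fg_free (G : group) : Prop := exists n, isomorphic G (freegrp n).

(* Mapping torus  M(phi) = < G, t | t^{-1} g t = phi(g), g in G >.     *)
(* Generators: Some g (the element g of G) and None (the letter t).    *)
(* Relations: the multiplication table of G (so that the group on      *)
(* generators G, t with these relations alone is the free product      *)
(* G * <t>) together with t^{-1} g t = phi(g) for every g in G.        *)
Definition mt_rel (G : group) (phi : G -> G) (u v : word (option G)) : Prop :=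
  (exists g h : G, u = [:: (Some g, false); (Some h, false)]
                /\ v = [:: (Some (gmul g h), false)])
  \/ (exists g : G, u = [:: (None, true); (Some g, false); (None, false)]
                 /\ v = [:: (Some (phi g), false)]).

Definition mapping_torus (G : group) (phi : hom G G) : group :=
  presented_group (mt_rel (hfun phi)).

(* A homomorphism phi out of F_n is given by the tuple of reduced words
   (phi x_1, ..., phi x_n).  An elementary Nielsen transformation
   of the tuple (replacing phi x_i by phi x_i (phi x_j)^(+-1) or by
   (phi x_j)^(+-1) phi x_i) amounts to precomposing phi with an automorphism,
   and while the tuple is not Nielsen reduced one such transformation lowers
   the total length, or keeps it and lowers a tie-breaking weight.  Hence some
   phi o alpha, alpha an automorphism, is either Nielsen reduced, and then no
   nonempty reduced word is mapped to 1, so phi is injective; or it kills a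
   basis element x_k.  Conjugating by alpha does not change the mapping torus,
   and if psi x_k = 1 then t^-1 x_k t = 1 forces x_k = 1 in M(psi), so M(psi)
   is the mapping torus of the induced endomorphism of F_(n-1).  Induction on
   the rank concludes. *)

From Pilot Require Import Defs.
From mathcomp Require Import all_boot.
From Stdlib Require Import Classical Lia.
From mathcomp Require Import zify.

Set Implicit Arguments.
Unset Strict Implicit.
Unset Printing Implicit Defensive.

Section GroupTheory.
Variable G : group.
Implicit Types x y z : G.

Lemma gmulxV x : gmul x (ginv x) = gone G.
Proof.
by rewrite -[LHS]gmul1 -(gmulV (ginv x)) -gmulA (gmulA (ginv x) x) gmulV gmul1.
Qed.

Lemma gmulx1 x : gmul x (gone G) = x.
Proof. by rewrite -(gmulV x) gmulA gmulxV gmul1. Qed.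

Lemma gmulI x : injective (gmul x).
Proof. by move=> y z E; rewrite -(gmul1 y) -(gmul1 z) -(gmulV x) -!gmulA E. Qed.

Lemma gmulIr x : injective (fun y => gmul y x).
Proof. by move=> y z /= E; rewrite -(gmulx1 y) -(gmulx1 z) -(gmulxV x) !gmulA E. Qed.

Lemma ginv_unique x y : gmul y x = gone G -> y = ginv x.
Proof. by move=> E; rewrite -(gmulx1 y) -(gmulxV x) gmulA E gmul1. Qed.

End GroupTheory.

Section HomTheory.
Variables (G H : group) (h : hom G H).

Lemma hom1 : h (gone G) = gone H.
Proof. by apply: (@gmulI _ (h (gone G))); rewrite -hmul gmul1 gmulx1. Qed.

Lemma homV x : h (ginv x) = ginv (h x).
Proof. by apply: ginv_unique; rewrite -hmul gmulV hom1. Qed.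

End HomTheory.

Definition hcomp (G H K : group) (g : hom H K) (f : hom G H) : hom G K.
Proof. by refine (@Hom G K (fun x => g (f x)) _) => x y; rewrite !hmul. Defined.

Definition hid (G : group) : hom G G := @Hom G G id (fun _ _ => erefl).

Definition hinv (G H : group) (f : hom G H) (g : H -> G)
  (fg : cancel g f) (gf : cancel f g) : hom H G.
Proof.
refine (@Hom H G g _) => x y.
by rewrite -{1}(fg x) -{1}(fg y) -hmul gf.
Defined.

Lemma isomorphic_refl (G : group) : isomorphic G G.
Proof. by exists (hid G); exists id. Qed.

Lemma isomorphic_trans (G H K : group) :
  isomorphic G H -> isomorphic H K -> isomorphic G K.
Proof. by move=> [f bf] [g bg]; exists (hcomp g f); apply: bij_comp. Qed.

Section Presentation.
Variables (X : Type) (R : word X -> word X -> Prop).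
Local Notation P := (presented_group R).

Lemma cls_cat u v : cls R (u ++ v) = gmul (cls R u : P) (cls R v).
Proof. by rewrite /= pmul_cls. Qed.

Lemma cls_flip l : cls R [:: flip l] = ginv (cls R [:: l] : P).
Proof.
apply: (@ginv_unique P); rewrite /= pmul_cls /=.
by apply: cls_eq; have := weq_cancel R [::] (flip l) [::]; rewrite flipK.
Qed.

Lemma cls_winv w : cls R (winv w) = ginv (cls R w : P).
Proof. by apply: (@ginv_unique P); rewrite /= pmul_cls; apply/cls_eq/winv_cancel. Qed.

Lemma weq_of_cls_eq u v : cls R u = cls R v -> weq R u v.
Proof.
move=> E; have /= -> : proj1_sig (cls R u) = proj1_sig (cls R v) by rewrite E.
exact: weq_refl.
Qed.

Variables (K : group) (f : X -> K).

Definition letter_val (l : letter X) : K := if l.2 then ginv (f l.1) else f l.1.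

Fixpoint eval_word (w : word X) : K :=
  if w is l :: w' then gmul (letter_val l) (eval_word w') else gone K.

Lemma eval_word_cat u v : eval_word (u ++ v) = gmul (eval_word u) (eval_word v).
Proof. by elim: u => [|l u IH] /=; rewrite ?gmul1 // IH gmulA. Qed.

Lemma letter_val_flip l : gmul (letter_val l) (letter_val (flip l)) = gone K.
Proof. by case: l => x [] /=; rewrite /letter_val /= ?gmulV ?gmulxV. Qed.

Hypothesis eval_rel : forall a b, R a b -> eval_word a = eval_word b.

Lemma eval_word_weq u v : weq R u v -> eval_word u = eval_word v.
Proof.
elim=> [w|a b _ IH|a b c _ IH1 _ IH2|u0 x v0|u0 a b v0 Hr] //.
- by rewrite IH1.
- by rewrite !eval_word_cat /= (gmulA (letter_val x)) letter_val_flip gmul1.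
- by rewrite !eval_word_cat (eval_rel Hr).
Qed.

Definition pres_lift : hom P K.
Proof.
refine (@Hom P K (fun A => eval_word (Defs.repr A)) _) => A B.
have liftE w : eval_word (Defs.repr (cls R w)) = eval_word w.
  exact: eval_word_weq (repr_cls _ w).
by rewrite -(Defs.reprK A) -(Defs.reprK B) /= pmul_cls !liftE eval_word_cat.
Defined.

Lemma pres_lift_cls w : pres_lift (cls R w) = eval_word w.
Proof. exact: eval_word_weq (repr_cls _ _). Qed.

End Presentation.

Section PresentationHom.
Variables (X : Type) (R : word X -> word X -> Prop) (K : group).
Local Notation P := (presented_group R).

Lemma hom_cls (h : hom P K) w :
  h (cls R w) = eval_word (fun x => h (cls R [:: (x, false)])) w.
Proof.
elim: w => [|[x b] w IH] /=; first exact: hom1.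
rewrite -[(x, b) :: w]/([:: (x, b)] ++ w) cls_cat hmul -IH; congr (gmul _ _).
case: b; rewrite /letter_val //=.
by rewrite -[(x, true)]/(flip (x, false)) cls_flip homV.
Qed.

Lemma pres_hom_ext (h1 h2 : hom P K) :
  (forall x, h1 (cls R [:: (x, false)]) = h2 (cls R [:: (x, false)])) ->
  forall A, h1 A = h2 A.
Proof.
move=> E A; rewrite -(Defs.reprK A) !hom_cls.
by elim: (Defs.repr A) => [|[x b] w IH] //=; rewrite IH /letter_val /= E.
Qed.

End PresentationHom.

Section MappingTorus.
Variables (G : group) (phi : hom G G).
Local Notation MT := (mapping_torus phi).

Definition mt_elt (g : G) : MT := cls (mt_rel phi) [:: (Some g, false)].
Definition mt_t : MT := cls (mt_rel phi) [:: (None, false)].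

Lemma mt_eltM g h : mt_elt (gmul g h) = gmul (mt_elt g) (mt_elt h).
Proof.
rewrite /mt_elt /= pmul_cls /=; apply/cls_eq/weq_sym.
have Hr : mt_rel phi [:: (Some g, false); (Some h, false)]
                     [:: (Some (gmul g h), false)] by left; exists g, h.
by have := weq_rel [::] [::] Hr; rewrite /= ?cats0.
Qed.

Definition mt_elt_hom : hom G MT := Hom mt_eltM.

Lemma mt_elt1 : mt_elt (gone G) = gone MT.
Proof. exact: (hom1 mt_elt_hom). Qed.

Lemma mt_tJ g : gmul (ginv mt_t) (gmul (mt_elt g) mt_t) = mt_elt (phi g).
Proof.
rewrite /mt_t -[(None, false)]/(flip (None, true)).
rewrite -[ginv _](@cls_flip _ (mt_rel phi)) flipK /mt_elt /= !pmul_cls /=.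
apply: cls_eq.
have Hr : mt_rel phi [:: (None, true); (Some g, false); (None, false)]
                     [:: (Some (phi g), false)] by right; exists g.
by have := weq_rel [::] [::] Hr; rewrite /= ?cats0.
Qed.

Lemma mt_elt_kernel g : phi g = gone G -> mt_elt g = gone MT.
Proof.
move=> Eg; have := mt_tJ g; rewrite Eg mt_elt1 => /(congr1 (gmul mt_t)).
rewrite gmulA gmulxV gmul1 gmulx1 -{2}(gmul1 mt_t); exact: gmulIr.
Qed.

End MappingTorus.

Section MappingTorusMap.
Variables (G H : group) (phi : hom G G) (psi : hom H H) (e : hom G H).
Hypothesis e_comm : forall g, mt_elt psi (psi (e g)) = mt_elt psi (e (phi g)).

Definition mt_map_gen (o : option G) : mapping_torus psi :=
  if o is Some g then mt_elt psi (e g) else mt_t psi.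

Lemma mt_map_rel a b :
  mt_rel phi a b -> eval_word mt_map_gen a = eval_word mt_map_gen b.
Proof.
case=> [[g [h [-> ->]]]|[g [-> ->]]];
  cbn [eval_word letter_val fst snd mt_map_gen]; rewrite !gmulx1.
- by rewrite hmul mt_eltM.
- by rewrite mt_tJ e_comm.
Qed.

Definition mt_map : hom (mapping_torus phi) (mapping_torus psi) :=
  pres_lift mt_map_rel.

Lemma mt_map_elt g : mt_map (mt_elt phi g) = mt_elt psi (e g).
Proof. by rewrite /mt_map pres_lift_cls; apply: gmulx1. Qed.

Lemma mt_map_t : mt_map (mt_t phi) = mt_t psi.
Proof. by rewrite /mt_map pres_lift_cls; apply: gmulx1. Qed.

End MappingTorusMap.

(* The two maps need only be mutually inverse, and equivariant, after passing
   to the mapping tori; this is what lets us discard a killed generator. *)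
Lemma mapping_torus_iso_of_maps (G H : group) (phi : hom G G) (psi : hom H H)
    (e1 : hom G H) (e2 : hom H G)
    (e1_comm : forall g, mt_elt psi (psi (e1 g)) = mt_elt psi (e1 (phi g)))
    (e2_comm : forall h, mt_elt phi (phi (e2 h)) = mt_elt phi (e2 (psi h))) :
  (forall g, mt_elt phi (e2 (e1 g)) = mt_elt phi g) ->
  (forall h, mt_elt psi (e1 (e2 h)) = mt_elt psi h) ->
  isomorphic (mapping_torus phi) (mapping_torus psi).
Proof.
move=> e21 e12; exists (mt_map e1_comm), (mt_map e2_comm).
- apply: (pres_hom_ext (h1 := hcomp (mt_map e2_comm) (mt_map e1_comm)) (h2 := hid _)).
  case=> [g|].
  + change (mt_map e2_comm (mt_map e1_comm (mt_elt phi g)) = mt_elt phi g).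
    by rewrite !mt_map_elt e21.
  + change (mt_map e2_comm (mt_map e1_comm (mt_t phi)) = mt_t phi).
    by rewrite !mt_map_t.
- apply: (pres_hom_ext (h1 := hcomp (mt_map e1_comm) (mt_map e2_comm)) (h2 := hid _)).
  case=> [h|].
  + change (mt_map e1_comm (mt_map e2_comm (mt_elt psi h)) = mt_elt psi h).
    by rewrite !mt_map_elt e12.
  + change (mt_map e1_comm (mt_map e2_comm (mt_t psi)) = mt_t psi).
    by rewrite !mt_map_t.
Qed.

Lemma mapping_torus_conj (G H : group) (phi : hom G G) (psi : hom H H) (e : hom G H) :
  bijective e -> (forall g, psi (e g) = e (phi g)) ->
  isomorphic (mapping_torus phi) (mapping_torus psi).
Proof.
case=> g gK Kg e_comm; pose ei := hinv Kg gK.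
have ei_comm h : phi (ei h) = ei (psi h).
  by apply: (can_inj gK); rewrite /= -e_comm !Kg.
apply: (@mapping_torus_iso_of_maps _ _ phi psi e ei) => x /=.
- by rewrite e_comm.
- by rewrite ei_comm.
- by rewrite gK.
- by rewrite Kg.
Qed.

Section ReducedWords.
Variable X : eqType.
Implicit Types (l x y : letter X) (u v w a b p s z : word X).

Definition push l w : word X :=
  if w is l' :: w' then (if l' == flip l then w' else l :: w) else [:: l].

Definition red w := foldr push [::] w.

Fixpoint reduced w : bool :=
  if w is x :: w' then (if w' is y :: _ then y != flip x else true) && reduced w'
  else true.

Definition joins u v : bool :=
  if u is a :: u' then (if v is b :: _ then b != flip (last a u') else true) else true.

Lemma flip_neq l : (flip l == l) = false.
Proof. by case: l => x b; rewrite /flip /= xpair_eqE eqxx /=; case: b. Qed.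

Lemma neq_flip l : l != flip l.
Proof. by rewrite eq_sym flip_neq. Qed.

Lemma neq_flipC x y : (x != flip y) = (y != flip x).
Proof. by apply/idP/idP; apply: contra => /eqP ->; rewrite flipK. Qed.

Lemma eq_letter_gen x y : x.1 = y.1 -> x != flip y -> x = y.
Proof.
case: x => i b; case: y => j c /= <-; rewrite /flip /=.
by case: b; case: c; rewrite ?eqxx.
Qed.

Lemma reduced_cat u v : reduced (u ++ v) = [&& reduced u, reduced v & joins u v].
Proof.
elim: u => [|x u IH]; first by case: v => [|z v] //=; rewrite ?andbT.
rewrite cat_cons /= IH.
case: u {IH} => [|y u] /=; case: v => [|z v] /=; rewrite ?andbT ?cats0 //.
- by rewrite [RHS]andbC.
- by rewrite !andbA.
Qed.

Lemma reduced_catl u v : reduced (u ++ v) -> reduced u.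
Proof. by rewrite reduced_cat => /and3P[]. Qed.

Lemma reduced_catr u v : reduced (u ++ v) -> reduced v.
Proof. by rewrite reduced_cat => /and3P[]. Qed.

Lemma reduced_push l w : reduced w -> reduced (push l w).
Proof.
case: w => [|y w] //= H.
case: ifP => E //=; first by case: w H => [|z w] //= /andP[].
by rewrite E H.
Qed.

Lemma reduced_red w : reduced (red w).
Proof. by elim: w => [|x w IH] //=; apply: reduced_push. Qed.

Lemma red_reduced w : reduced w -> red w = w.
Proof.
elim: w => [|x w IH] //= /andP[H1 H2]; rewrite IH //.
by case: w H1 {IH H2} => [|y w] //= /negbTE ->.
Qed.

Lemma redK w : red (red w) = red w.
Proof. exact/red_reduced/reduced_red. Qed.

Lemma red_cat u v : red (u ++ v) = foldr push (red v) u.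
Proof. by rewrite /red foldr_cat. Qed.

Lemma red_catr u v : red (u ++ v) = red (u ++ red v).
Proof. by rewrite !red_cat redK. Qed.

Lemma push_flip l w : reduced w -> push l (push (flip l) w) = w.
Proof.
case: w => [|y w] /=; first by rewrite eqxx.
rewrite flipK; case: eqP => [->|Hy] /= H.
- by case: w H => [|z w] //= /andP[/negbTE ->].
- by rewrite eqxx.
Qed.

Lemma red_weq (R : word X -> word X -> Prop) :
  (forall a b, ~ R a b) -> forall u v, weq R u v -> red u = red v.
Proof.
move=> noR u v; elim=> // {u v}.
- by move=> u v w _ -> _ ->.
- by move=> u x v; rewrite !red_cat /= push_flip //; apply: reduced_red.
- by move=> u a b v Hr; case: (noR _ _ Hr).
Qed.

Lemma weq_red (R : word X -> word X -> Prop) w : weq R w (red w).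
Proof.
elim: w => [|x w IH] /=; first exact: weq_refl.
apply: weq_trans (_ : weq R (x :: red w) _).
  by have := weq_ctx [:: x] [::] IH; rewrite /= !cats0.
case: (red w) => [|y w'] /=; first exact: weq_refl.
case: eqP => [->|_]; last exact: weq_refl.
exact: (weq_cancel R [::] x w').
Qed.

Lemma winv_cat u v : winv (u ++ v) = winv v ++ winv u.
Proof. by rewrite /winv map_cat rev_cat. Qed.

Lemma winvK : involutive (@winv X).
Proof.
by move=> w; rewrite /winv map_rev revK -map_comp (eq_map (@flipK X)) map_id.
Qed.

Lemma size_winv w : size (winv w) = size w.
Proof. by rewrite /winv size_rev size_map. Qed.

Lemma winv_cons x w : winv (x :: w) = winv w ++ [:: flip x].
Proof. by rewrite -cat1s winv_cat. Qed.

Lemma winv_rcons s x : winv (rcons s x) = flip x :: winv s.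
Proof. by rewrite -cats1 winv_cat. Qed.

Lemma joins_rcons u x y v : joins (u ++ [:: x]) (y :: v) = (y != flip x).
Proof. by case: u => [|a u] //=; rewrite last_cat. Qed.

Lemma reduced_winv w : reduced (winv w) = reduced w.
Proof.
elim: w => [|x w IH] //=.
rewrite winv_cons reduced_cat IH /= andbC; congr (_ && _).
case: w {IH} => [|y w] //=.
by rewrite winv_cons joins_rcons flipK eq_sym.
Qed.

Lemma weq_cat_winv (R : word X -> word X -> Prop) a p b :
  weq R (a ++ p ++ winv p ++ b) (a ++ b).
Proof.
elim: p a b => [|x p IH] a b /=; first exact: weq_refl.
rewrite winv_cons -catA /=.
have := IH (a ++ [:: x]) (flip x :: b); rewrite -!catA /= => H.
exact: weq_trans H (weq_cancel _ _ _ _).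
Qed.

Lemma red_cat_winv a p b : red (a ++ p ++ winv p ++ b) = red (a ++ b).
Proof. exact: (red_weq (R := fun _ _ => False) (fun _ _ F => F) (weq_cat_winv _ _ _ _)). Qed.

Lemma red_cat_decomp a b : reduced a -> reduced b ->
  exists a' p b', [/\ a = a' ++ p, b = winv p ++ b', red (a ++ b) = a' ++ b'
                    & reduced (a' ++ b')].
Proof.
move=> Ha Hb.
suff [a' [p [b' [Ea Eb Ef]]]] : exists a' p b',
    [/\ a = a' ++ p, b = winv p ++ b' & foldr push b a = a' ++ b'].
  have E : red (a ++ b) = a' ++ b' by rewrite red_cat (red_reduced Hb).
  by exists a', p, b'; split => //; rewrite -E; apply: reduced_red.
elim: a Ha => [|x a IH] Ha; first by exists [::], [::], b.
have [a' [p [b' [Ea -> Ef]]]] := IH (reduced_catr (Ha : reduced ([:: x] ++ a))).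
subst a; rewrite /= Ef; clear IH.
case: a' Ha Ef => [|y a'] Ha Ef.
- case: b' Ef => [|z b'] Ef; first by exists [:: x], p, [::].
  rewrite /=; case: eqP => [Ez|Nz]; last by exists [:: x], p, (z :: b').
  by exists [::], (x :: p), b'; rewrite winv_cons -catA /= -Ez.
- move: Ha => /= /andP[/negbTE Hy _].
  by rewrite Hy; exists [:: x, y & a'], p, b'.
Qed.

Lemma reduced_cat_winv s : reduced (s ++ winv s) -> s = [::].
Proof.
case/lastP: s => [|y c] //.
by rewrite winv_rcons -cats1 reduced_cat joins_rcons eqxx !andbF.
Qed.

Lemma reduced_winv_fixed z : reduced z -> z = winv z -> z = [::].
Proof.
move: {2}(size z) (leqnn (size z)) => N; elim: N z => [|N IH] z.
  by case: z.
case: z => [|c z'] //; case/lastP: z' => [|m d] Hs Hr.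
- by rewrite /winv /= => -[] /eqP; rewrite eq_sym flip_neq.
- rewrite -rcons_cons winv_rcons winv_cons => -[Ec].
  rewrite -cats1 => /eqP; rewrite eqseq_cat ?size_winv //.
  case/andP=> /eqP Em /eqP [Ed].
  have Hm : reduced m.
    by move: Hr; rewrite -rcons_cons -cats1 => /reduced_catl /= /andP[].
  have Hsm : size m <= N by move: Hs; rewrite /= size_rcons; lia.
  have Em0 := IH m Hsm Hm Em; subst m.
  by move: Hr; rewrite /= Ed eqxx.
Qed.

End ReducedWords.

Section Cancellation.
Variable X : eqType.
Implicit Types (a b p : word X).

Definition canc a b : nat := (size a + size b - size (red (a ++ b)))./2.

Lemma cancE a b a' p b' :
  a = a' ++ p -> b = winv p ++ b' -> red (a ++ b) = a' ++ b' -> canc a b = size p.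
Proof.
move=> -> -> E; rewrite /canc E !size_cat size_winv.
have -> : size a' + size p + (size p + size b') - (size a' + size b') = (size p).*2.
  by rewrite -addnn; lia.
exact: doubleK.
Qed.

Lemma canc_leq a b : reduced a -> reduced b -> canc a b <= size a.
Proof.
move=> Ha Hb; have [a' [p [b' [Ea Eb Ered _]]]] := red_cat_decomp Ha Hb.
by rewrite (cancE Ea Eb Ered) Ea size_cat leq_addl.
Qed.

Lemma size_red_cat a b : reduced a -> reduced b ->
  size (red (a ++ b)) = size a + size b - (canc a b).*2.
Proof.
move=> Ha Hb; have [a' [p [b' [Ea Eb Ered _]]]] := red_cat_decomp Ha Hb.
by rewrite (cancE Ea Eb Ered) Ered Ea Eb !size_cat size_winv -addnn; lia.
Qed.

Lemma canc_winv a b : reduced a -> reduced b -> canc (winv b) (winv a) = canc a b.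
Proof.
move=> Ha Hb; have [a' [p [b' [Ea Eb Ered _]]]] := red_cat_decomp Ha Hb.
rewrite (cancE Ea Eb Ered).
have Ea2 : winv a = winv p ++ winv a' by rewrite Ea winv_cat.
have Eb2 : winv b = winv b' ++ p by rewrite Eb winv_cat winvK.
apply: (cancE Eb2 Ea2).
rewrite Eb2 Ea2 -catA red_cat_winv red_reduced // -winv_cat reduced_winv.
by rewrite -Ered; apply: reduced_red.
Qed.

(* A nonempty reduced word cannot cancel half of itself against itself:
   [s = a' ++ p] with [s = winv p ++ b'] and [size a' <= size p] would make
   the middle of [s] a reduced word equal to its own inverse. *)
Lemma canc_self s : reduced s -> s != [::] -> (canc s s).*2 < size s.
Proof.
move=> Hs Hne; have [a' [p [b' [Ea Eb Ered Hab]]]] := red_cat_decomp Hs Hs.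
rewrite (cancE Ea Eb Ered) ltnNge; apply/negP => Hle.
have Ha'p : size a' <= size p by move: Hle; rewrite Ea size_cat -addnn; lia.
set k := size p - size a'.
have Ep : p = take k p ++ drop k p by rewrite cat_take_drop.
have E1 : winv p = a' ++ take k p.
  have : take (size p) s = winv p by rewrite Eb -(size_winv p) take_size_cat.
  by rewrite {1}Ea take_cat ltnNge Ha'p /= => <-.
have E2 : winv p = winv (drop k p) ++ winv (take k p) by rewrite {1}Ep winv_cat.
have Hsd : size (winv (drop k p)) = size a' by rewrite size_winv size_drop /k; lia.
move: E1; rewrite E2 => /eqP; rewrite eqseq_cat // => /andP[/eqP Ed /eqP Et].
have Hp : reduced p by move: Hs; rewrite Ea => /reduced_catr.
have Ht0 : take k p = [::].
  by apply: reduced_winv_fixed (esym Et); move: Hp; rewrite {1}Ep => /reduced_catl.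
have Ep' : drop k p = p by rewrite {2}Ep Ht0.
rewrite Ep' in Ed.
have Hw : winv p = [::] by apply: reduced_cat_winv; rewrite winvK Ed -Ea.
have Hp0 : p = [::] by rewrite -(winvK p) Hw.
by move: Hne; rewrite Ea -Ed Hw Hp0.
Qed.

Lemma red_cat_take a b k z : reduced a -> reduced b ->
  canc a b < k <= size b -> reduced (take k b ++ z) ->
  exists z', red (a ++ take k b ++ z) = take (size a - canc a b) a ++ z'.
Proof.
move=> Ha Hb /andP[Hk Hkb] Hz.
have [a' [p [b' [Ea Eb Ered Hab]]]] := red_cat_decomp Ha Hb.
rewrite (cancE Ea Eb Ered) in Hk *; clear Ered.
have [k' Ek] : exists k', k - size p = k'.+1 by exists (k - size p).-1; lia.
move: Hz Hab; rewrite Eb take_cat size_winv ltnNge (ltnW Hk) /= Ek.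
case: b' Eb => [|c b''] Eb; first by move: Hkb Hk; rewrite Eb cats0 size_winv; lia.
rewrite -catA => Hz Hab.
exists (c :: take k' b'' ++ z).
rewrite Ea -!catA red_cat_winv red_reduced.
  by rewrite size_cat addnK take_size_cat.
move: Hz Hab; rewrite !reduced_cat => /and3P[_ Hz _] /and3P[Ha' _ Hj].
by rewrite Ha' Hz; case: (a') Hj.
Qed.

End Cancellation.

Section FreeGroup.
Variable n : nat.
Local Notation F := (freegrp n).

Definition fcls (w : word 'I_n) : F := cls (fun _ _ => False) w.
Definition gen (i : 'I_n) : F := fcls [:: (i, false)].

Lemma fcls_cat u v : fcls (u ++ v) = gmul (fcls u) (fcls v).
Proof. exact: cls_cat. Qed.

Lemma fcls_winv w : fcls (winv w) = ginv (fcls w).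
Proof. exact: cls_winv. Qed.

Lemma fcls_red w : fcls (red w) = fcls w.
Proof. exact/cls_eq/weq_sym/weq_red. Qed.

Lemma red_of_fcls_eq u v : fcls u = fcls v -> red u = red v.
Proof. by rewrite /fcls => /weq_of_cls_eq; apply: red_weq => a b. Qed.

Lemma freegrp_reduced_cls (A : F) : exists2 w, reduced w & A = fcls w.
Proof.
exists (red (Defs.repr A)); first exact: reduced_red.
by rewrite fcls_red /fcls Defs.reprK.
Qed.

Lemma freegrp_hom_ext (K : group) (h1 h2 : hom F K) :
  (forall i, h1 (gen i) = h2 (gen i)) -> forall A, h1 A = h2 A.
Proof. exact: pres_hom_ext. Qed.

Lemma freegrp_hom_inj (K : group) (h : hom F K) :
  (forall w, reduced w -> w <> [::] -> h (fcls w) <> gone K) -> injective h.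
Proof.
move=> h_nontriv A B E.
have [w Hw Ew] := freegrp_reduced_cls (gmul A (ginv B)).
have [Ew0|Nw] := eqVneq w [::].
- apply: (@gmulIr _ (ginv B)); rewrite gmulxV Ew Ew0; exact: erefl.
- by case: (h_nontriv w Hw (elimN eqP Nw)); rewrite -Ew hmul homV E gmulxV.
Qed.

End FreeGroup.

Section Substitution.
Variables (n m : nat) (U : 'I_n -> word 'I_m).

Definition limg (l : letter 'I_n) : word 'I_m :=
  if l.2 then winv (U l.1) else U l.1.

Definition subst_word (w : word 'I_n) : word 'I_m := flatten (map limg w).

Definition subst : hom (freegrp n) (freegrp m) :=
  pres_lift (K := freegrp m) (f := fun i => fcls (U i)) (fun _ _ F => False_ind _ F).

Lemma subst_fcls w : subst (fcls w) = fcls (subst_word w).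
Proof.
rewrite /subst pres_lift_cls.
elim: w => [|[i b] w IH] //=; rewrite IH.
rewrite -[subst_word (_ :: _)]/(limg (i, b) ++ subst_word w) fcls_cat.
by congr (pmul _ _); case: b; rewrite /letter_val /limg //= fcls_winv.
Qed.

Lemma subst_gen i : subst (gen i) = fcls (U i).
Proof. by rewrite /gen subst_fcls /subst_word /= cats0. Qed.

Lemma limg_flip l : limg (flip l) = winv (limg l).
Proof. by case: l => i []; rewrite /limg /= ?winvK. Qed.

Lemma size_limg l : size (limg l) = size (U l.1).
Proof. by case: l => i []; rewrite /limg /= ?size_winv. Qed.

End Substitution.

(* Nielsen's condition: in any product [limg l1 limg l limg l2] without
   inverse neighbours, some letter of the middle factor survives. *)
Definition nielsen_reduced n m (U : 'I_n -> word 'I_m) :=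
  forall l1 l l2 : letter 'I_n, l1 != flip l -> l2 != flip l ->
    canc (limg U l1) (limg U l) + canc (limg U l) (limg U l2) < size (limg U l).

Section NielsenReducedInjective.
Variables (n m : nat) (U : 'I_n -> word 'I_m).
Hypothesis U_reduced : forall i, reduced (U i).
Hypothesis U_nonempty : forall i, U i <> [::].
Local Notation s := (limg U).

Lemma limg_reduced l : reduced (s l).
Proof. by rewrite /limg; case: ifP => _; rewrite ?reduced_winv. Qed.

Lemma limg_nonempty l : s l != [::].
Proof. by rewrite -size_eq0 size_limg size_eq0; apply/eqP/U_nonempty. Qed.

Hypothesis U_nielsen : nielsen_reduced U.

Definition canc_next l (w : word 'I_n) :=
  if w is l2 :: _ then canc (s l) (s l2) else 0.

Lemma canc_next_bound l l2 w : reduced (l2 :: w) -> l != flip l2 ->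
  canc (s l) (s l2) + canc_next l2 w < size (s l2).
Proof.
case: w => [|l3 w] /= Hr Hl; last by case/andP: Hr => H3 _; apply: U_nielsen.
by have := U_nielsen Hl (neq_flip l2); lia.
Qed.

Lemma canc_next_lt l w : reduced (l :: w) -> canc_next l w < size (s l).
Proof.
case: w => [|l2 w] /= Hr; first by case: (s l) (limg_nonempty l).
by case/andP: Hr => H1 _; have := U_nielsen (neq_flip l) H1; lia.
Qed.

Lemma red_subst_word l w : reduced (l :: w) ->
  exists z, red (subst_word U (l :: w)) = take (size (s l) - canc_next l w) (s l) ++ z.
Proof.
elim: w l => [|l2 w IH] l Hr.
  by exists [::]; rewrite /subst_word /= cats0 red_reduced ?limg_reduced ?subn0 ?take_size ?cats0.
have Hr2 : reduced (l2 :: w) by case/andP: Hr.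
have Hl : l != flip l2 by rewrite neq_flipC; case/andP: Hr.
have [z2 Ez2] := IH l2 Hr2.
have Hb := canc_next_bound Hr2 Hl.
rewrite -[subst_word U _]/(s l ++ subst_word U (l2 :: w)) red_catr Ez2.
apply: red_cat_take; rewrite ?limg_reduced -?Ez2 ?reduced_red //.
by apply/andP; split; [lia | apply: leq_subr].
Qed.

Lemma nielsen_reduced_subst_inj : injective (subst U).
Proof.
apply: freegrp_hom_inj => -[|l w] // Hr _; rewrite subst_fcls => E.
have [z Ez] := red_subst_word Hr.
have := red_of_fcls_eq (E : fcls _ = fcls [::]); rewrite Ez /=.
have := canc_next_lt Hr.
by case: (s l) (limg_nonempty l) => [|x t] // _ Hlt; rewrite /= subSn.
Qed.

End NielsenReducedInjective.

(* A word is read as a number in base [2 n], one digit per letter; comparing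
   these numbers gives a total order on words of equal length. *)
Section WordCode.
Variable n : nat.
Implicit Types (l : letter 'I_n) (w : word 'I_n).

Definition digit l : nat := l.2 + (nat_of_ord l.1).*2.

Fixpoint code w : nat :=
  if w is l :: w' then digit l * n.*2 ^ size w' + code w' else 0.

Lemma digit_lt l : digit l < n.*2.
Proof. by case: l => i b; rewrite /digit /=; have := ltn_ord i; case: b => /=; lia. Qed.

Lemma digit_inj : injective digit.
Proof.
move=> [i b] [j c]; rewrite /digit /= => E.
have Eb : b = c by have := congr1 odd E; rewrite !oddD !odd_double !addbF !oddb.
by subst c; have := congr1 half E; rewrite !half_bit_double => /val_inj ->.
Qed.

Lemma code_lt w : code w < n.*2 ^ size w.
Proof.
elim: w => [|l w IH] //=; rewrite expnS.
apply: (@leq_trans ((digit l).+1 * n.*2 ^ size w)).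
  by rewrite mulSn addnC ltn_add2r.
by rewrite leq_mul2r digit_lt orbT.
Qed.

Lemma code_cat w1 w2 : code (w1 ++ w2) = code w1 * n.*2 ^ size w2 + code w2.
Proof. by elim: w1 => [|l w1 IH] //=; rewrite IH size_cat expnD mulnDl mulnA addnA. Qed.

Lemma code_inj w1 w2 : size w1 = size w2 -> code w1 = code w2 -> w1 = w2.
Proof.
elim: w1 w2 => [|l w1 IH] [|l' w2] //= [Es] E.
have Hw1 := code_lt w1; have Hw2 := code_lt w2; rewrite -Es in Hw2.
have Hp : 0 < n.*2 ^ size w1 by case: (n.*2 ^ size w1) Hw1.
have Ed : digit l = digit l'.
  have := congr1 (fun t => t %/ n.*2 ^ size w1) E.
  by rewrite /= -Es !divnMDl // !divn_small // !addn0.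
rewrite Ed -Es in E; have /eqP : code w1 == code w2 by rewrite -(eqn_add2l (digit l' * n.*2 ^ size w1)) E.
by move/(IH _ Es) ->; rewrite (digit_inj Ed).
Qed.

Definition left_half w := take (uphalf (size w)) w.

(* The tie-breaking weight of Nielsen reduction: it only sees the left halves
   of [w] and of [winv w], hence is invariant under inversion and strictly
   decreases when a short prefix is replaced by a smaller one. *)
Definition half_weight w := code (left_half w) + code (left_half (winv w)).

Lemma half_weight_winv w : half_weight (winv w) = half_weight w.
Proof. by rewrite /half_weight winvK addnC. Qed.

Lemma half_weight_lt w1 w2 w : size w1 = size w2 -> size w1 <= size w ->
  code w1 < code w2 -> half_weight (w1 ++ w) < half_weight (w2 ++ w).
Proof.
move=> E12 Hw Hc.
have Hh1 : size w1 <= uphalf (size w1 + size w).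
  by rewrite geq_uphalf_double -addnn; lia.
have Hh2 : uphalf (size w1 + size w) <= size w.
  by rewrite leq_uphalf_double -addnn; lia.
set h := uphalf (size w1 + size w) in Hh1 Hh2.
have E1 v : size v = size w1 -> left_half (v ++ w) = v ++ take (h - size w1) w.
  by move=> Ev; rewrite /left_half size_cat Ev -/h take_cat Ev ltnNge Hh1.
have E2 v : size v = size w1 -> left_half (winv (v ++ w)) = take h (winv w).
  move=> Ev; rewrite /left_half winv_cat size_cat !size_winv Ev addnC -/h.
  by rewrite takel_cat // size_winv.
rewrite /half_weight E1 // E1 // E2 // E2 // ltn_add2r !code_cat ltn_add2r.
rewrite ltn_pmul2r // expn_gt0.
case: w2 E12 Hc => [|[i e] w2] E12 Hc; first by rewrite ltn0 in Hc.
by have := ltn_ord i; lia.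
Qed.

End WordCode.

Section NielsenMove.
Variables (n m : nat) (U : 'I_n -> word 'I_m).
Hypothesis U_reduced : forall i, reduced (U i).
Hypothesis U_nonempty : forall i, U i <> [::].
Local Notation s := (limg U).
Let s_reduced := limg_reduced U_reduced.
Let s_nonempty := limg_nonempty U_nonempty.

Lemma half_weight_limg l : half_weight (s l) = half_weight (U l.1).
Proof. by case: l => i []; rewrite /limg /= ?half_weight_winv. Qed.

Definition nielsen_move (x y : letter 'I_n) :=
  x.1 != y.1 /\
  (size (red (s x ++ s y)) < size (U x.1) \/
   size (red (s x ++ s y)) = size (U x.1) /\
   half_weight (red (s x ++ s y)) < half_weight (U x.1)).

Lemma canc_limg_gen_neq x y : x != flip y ->
  size (s y) <= (canc (s x) (s y)).*2 -> x.1 != y.1.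
Proof.
move=> Hxy Hc; apply/negP => /eqP E; have Exy := eq_letter_gen E Hxy; subst y.
have := canc_self (s_reduced x) (s_nonempty x).
by rewrite ltnNge Hc.
Qed.

Lemma nielsen_move_of_big_canc x y : x != flip y ->
  size (s y) < (canc (s x) (s y)).*2 -> nielsen_move x y.
Proof.
move=> Hxy Hc; split; first exact: canc_limg_gen_neq Hxy (ltnW Hc).
left; rewrite size_red_cat // -size_limg.
have := canc_leq (s_reduced x) (s_reduced y).
set c := canc _ _; set a := size (s x); set b := size (s y) in Hc *; lia.
Qed.

Lemma nielsen_move_of_big_canc_flip x y : x != flip y ->
  size (s x) < (canc (s x) (s y)).*2 -> nielsen_move (flip y) (flip x).
Proof.
move=> Hxy Hc; apply: nielsen_move_of_big_canc; first by rewrite flipK eq_sym.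
by rewrite !limg_flip canc_winv ?limg_reduced // size_winv.
Qed.

Lemma nielsen_move_of_decomp x y a p q : x.1 != y.1 ->
  s x = a ++ p -> s y = winv p ++ q -> reduced (a ++ q) ->
  size q = size p -> size p <= size a -> code (winv q) < code (winv p) ->
  nielsen_move x y.
Proof.
move=> Nxy Ex Ey Haq Eqp Hpa Hc; split => //; right.
rewrite -size_limg -half_weight_limg Ex Ey -catA red_cat_winv red_reduced //.
split; first by rewrite !size_cat Eqp.
rewrite -(half_weight_winv (a ++ q)) -(half_weight_winv (a ++ p)) !winv_cat.
by apply: half_weight_lt; rewrite ?size_winv ?Eqp.
Qed.

Section HalfCancellation.
Variables l1 l l2 : letter 'I_n.
Hypothesis l1l : l1 != flip l.
Hypothesis l2l : l2 != flip l.
Hypothesis small_canc : forall x y, x != flip y ->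
  (canc (s x) (s y)).*2 <= size (s y) /\ (canc (s x) (s y)).*2 <= size (s x).
Hypothesis middle_cancelled : size (s l) <= canc (s l1) (s l) + canc (s l) (s l2).

(* Without big cancellations, the middle factor is cancelled exactly half from
   each side. *)
Lemma half_canc_decomp : exists a1 p1 p2 b2,
  [/\ s l1 = a1 ++ p1, s l = winv p1 ++ p2, s l2 = winv p2 ++ b2,
      size p1 = size p2 & size p1 <= size a1 /\ size p2 <= size b2] /\
  reduced (a1 ++ p2) /\ reduced (winv p1 ++ b2).
Proof.
have [c1a c1b] := small_canc l1l.
have l_l2 : l != flip l2 by rewrite neq_flipC.
have [c2a c2b] := small_canc l_l2.
have [a1 [p1 [b1 [Ea1 Eb1 Ered1 Hr1]]]] := red_cat_decomp (s_reduced l1) (s_reduced l).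
have [a2 [p2 [b2 [Ea2 Eb2 Ered2 Hr2]]]] := red_cat_decomp (s_reduced l) (s_reduced l2).
have := middle_cancelled.
rewrite (cancE Ea1 Eb1 Ered1) (cancE Ea2 Eb2 Ered2) in c1a c1b c2a c2b * => Hmid.
have Es1 : size (s l) = size p1 + size b1 by rewrite Eb1 size_cat size_winv.
have Es2 : size (s l) = size a2 + size p2 by rewrite Ea2 size_cat.
have [Ep Ea2p] : size p1 = size p2 /\ size a2 = size p1.
  by move: c1a c2b Hmid Es2; rewrite -!addnn; set A := size (s l); lia.
have /eqP : winv p1 ++ b1 = a2 ++ p2 by rewrite -Eb1 -Ea2.
rewrite eqseq_cat ?size_winv //.
move=> /andP[/eqP Ea2' /eqP Eb1']; subst a2 b1.
have Ha1 : size p1 <= size a1 by move: c1b; rewrite Ea1 size_cat -addnn leq_add2r.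
have Hb2 : size p2 <= size b2.
  by move: c2a; rewrite Eb2 size_cat size_winv -addnn leq_add2l.
by exists a1, p1, p2, b2.
Qed.

Lemma half_canc_gen_neq : l1.1 != l.1 /\ l2.1 != l.1.
Proof.
have [c1a _] := small_canc l1l.
have l_l2 : l != flip l2 by rewrite neq_flipC.
have [_ c2b] := small_canc l_l2.
have Hmid := middle_cancelled.
move: c1a c2b Hmid; rewrite -!addnn.
set A := size (s l); set c1 := canc _ _; set c2 := canc _ _ => c1a c2b Hmid.
split; first by apply: canc_limg_gen_neq; rewrite // -addnn; lia.
have : (flip l2).1 != (flip l).1.
  apply: canc_limg_gen_neq.
    by apply: contra l2l => /eqP/(congr1 (@flip _)); rewrite !flipK => ->.
  by rewrite !limg_flip canc_winv // size_winv -/A -/c2 -addnn; lia.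
by [].
Qed.

Lemma nielsen_move_of_half_canc : exists x y, nielsen_move x y.
Proof.
have [a1 [p1 [p2 [b2 [[E1 E E2 Ep [Ha1 Hb2]] [Hr12 Hr21]]]]]] := half_canc_decomp.
have [N1 N2] := half_canc_gen_neq.
have : code (winv p1) != code (winv p2).
  apply: contraNneq (s_nonempty l) => /code_inj Ec.
  have Ep12 : p1 = p2 by rewrite -(winvK p1) Ec ?winvK // !size_winv.
  have Hr : reduced (winv p2 ++ winv (winv p2)) by rewrite winvK -{1}Ep12 -E.
  have Ew := reduced_cat_winv Hr.
  by rewrite E Ep12 Ew -(winvK p2) Ew.
case: ltngtP => // Hc _.
- exists (flip l2), (flip l); apply: (@nielsen_move_of_decomp _ _ (winv b2) p2 p1) => //.
  + by rewrite limg_flip E2 winv_cat winvK.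
  + by rewrite limg_flip E winv_cat winvK.
  + by rewrite -(winvK p1) -winv_cat reduced_winv.
  + by rewrite size_winv.
- exists l1, l; exact: (@nielsen_move_of_decomp _ _ a1 p1 p2).
Qed.

End HalfCancellation.

Lemma not_nielsen_reduced_move : ~ nielsen_reduced U -> exists x y, nielsen_move x y.
Proof.
move=> notNR.
case: (classic (exists x y, x != flip y /\
   (size (s y) < (canc (s x) (s y)).*2 \/ size (s x) < (canc (s x) (s y)).*2)))
  => [[x [y [Hxy [H|H]]]]|no_big].
- by exists x, y; apply: nielsen_move_of_big_canc.
- by exists (flip y), (flip x); apply: nielsen_move_of_big_canc_flip.
have small x y : x != flip y ->
    (canc (s x) (s y)).*2 <= size (s y) /\ (canc (s x) (s y)).*2 <= size (s x).
  by move=> Hxy; split; rewrite leqNgt; apply/negP => H; apply: no_big; exists x, y; auto.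
have [l1 [l [l2 [H1 H2 H3]]]] : exists l1 l l2, [/\ l1 != flip l, l2 != flip l &
    size (s l) <= canc (s l1) (s l) + canc (s l) (s l2)].
  apply: NNPP => none; apply: notNR => l1 l l2 H1 H2; rewrite ltnNge; apply/negP => H3.
  by apply: none; exists l1, l, l2.
exact: nielsen_move_of_half_canc H1 H2 small H3.
Qed.

End NielsenMove.

Section NielsenReduction.
Variables n m : nat.
Local Notation F := (freegrp n).
Implicit Types U : 'I_n -> word 'I_m.

Definition update U i (w : word 'I_m) := fun k => if k == i then w else U k.
Definition total_size U := \sum_(k < n) size (U k).
Definition total_weight U := \sum_(k < n) half_weight (U k).

Lemma sum_update (f : word 'I_m -> nat) U i w :
  \sum_(k < n) f (update U i w k) + f (U i) = \sum_(k < n) f (U k) + f w.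
Proof.
rewrite (bigD1 i) //= [in RHS](bigD1 i) //= /update eqxx.
rewrite (eq_bigr (fun k => f (U k))); last by move=> k /negbTE ->.
lia.
Qed.

Definition nielsen_lt U' U :=
  total_size U' < total_size U \/
  total_size U' = total_size U /\ total_weight U' < total_weight U.

Lemma nielsen_lt_ind (P : ('I_n -> word 'I_m) -> Prop) :
  (forall U, (forall U', nielsen_lt U' U -> P U') -> P U) -> forall U, P U.
Proof.
move=> IH; suff: forall a U, total_size U < a -> P U by move=> H U; apply: (H _ U).
elim=> [|a IHa] U // HU; move: {2}(total_weight U).+1 (ltnSn (total_weight U)) => b.
elim: b U HU => [|b IHb] U HU HW //.
by apply: IH => U' [HL|[HL HW']]; [apply: IHa | apply: IHb]; lia.
Qed.

Definition nielsen_gens i e (y : letter 'I_n) k : word 'I_n :=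
  if k == i then (if e then [:: flip y; (i, false)] else [:: (i, false); y])
  else [:: (k, false)].
Definition nielsen_gens_inv i e (y : letter 'I_n) k : word 'I_n :=
  if k == i then (if e then [:: y; (i, false)] else [:: (i, false); flip y])
  else [:: (k, false)].
Definition nielsen_aut i e y : hom F F := subst (nielsen_gens i e y).
Definition nielsen_aut_inv i e y : hom F F := subst (nielsen_gens_inv i e y).

Definition nielsen_update U i e y :=
  let w := red (limg U (i, e) ++ limg U y) in update U i (if e then winv w else w).

Section ElementaryAutomorphism.
Variables (i : 'I_n) (e : bool) (y : letter 'I_n).
Hypothesis y_neq : y.1 != i.

Lemma limg_single (V : 'I_n -> word 'I_n) l :
  V l.1 = [:: (l.1, false)] -> limg V l = [:: l].
Proof. by case: l => j [] /= E; rewrite /limg /= E. Qed.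

Lemma nielsen_autK : cancel (nielsen_aut_inv i e y) (nielsen_aut i e y).
Proof.
apply: (freegrp_hom_ext (h1 := hcomp (nielsen_aut i e y) (nielsen_aut_inv i e y))
                        (h2 := hid F)) => k.
change (nielsen_aut i e y (nielsen_aut_inv i e y (gen k)) = gen k).
rewrite /nielsen_aut_inv /nielsen_aut subst_gen subst_fcls.
have [->|Nk] := eqVneq k i; last first.
  by rewrite /nielsen_gens_inv (negbTE Nk) /subst_word /= /limg /= /nielsen_gens (negbTE Nk).
have Ey l : l.1 != i -> limg (nielsen_gens i e y) l = [:: l].
  by move=> Nl; apply: limg_single; rewrite /nielsen_gens (negbTE Nl).
have [Ey1 Ey2] := (Ey y y_neq, Ey (flip y) y_neq).
rewrite /nielsen_gens_inv eqxx /subst_word; clear Ey.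
case: e Ey1 Ey2 => /= E1 E2; rewrite ?E1 ?E2 /limg /= /nielsen_gens eqxx /=; apply: cls_eq.
- exact: (weq_cancel _ [::] y [:: (i, false)]).
- exact: (weq_cancel _ [:: (i, false)] y [::]).
Qed.

Lemma nielsen_aut_invK : cancel (nielsen_aut i e y) (nielsen_aut_inv i e y).
Proof.
apply: (freegrp_hom_ext (h1 := hcomp (nielsen_aut_inv i e y) (nielsen_aut i e y))
                        (h2 := hid F)) => k.
change (nielsen_aut_inv i e y (nielsen_aut i e y (gen k)) = gen k).
rewrite /nielsen_aut_inv /nielsen_aut subst_gen subst_fcls.
have [->|Nk] := eqVneq k i; last first.
  by rewrite /nielsen_gens (negbTE Nk) /subst_word /= /limg /= /nielsen_gens_inv (negbTE Nk).
have Ey l : l.1 != i -> limg (nielsen_gens_inv i e y) l = [:: l].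
  by move=> Nl; apply: limg_single; rewrite /nielsen_gens_inv (negbTE Nl).
have [Ey1 Ey2] := (Ey y y_neq, Ey (flip y) y_neq).
rewrite /nielsen_gens eqxx /subst_word; clear Ey.
case: e Ey1 Ey2 => /= E1 E2; rewrite ?E1 ?E2 /limg /= /nielsen_gens_inv eqxx /=; apply: cls_eq.
- by have := weq_cancel (fun _ _ => False) [::] (flip y) [:: (i, false)]; rewrite flipK.
- by have := weq_cancel (fun _ _ => False) [:: (i, false)] (flip y) [::]; rewrite flipK.
Qed.

Lemma subst_nielsen_update U A :
  subst (nielsen_update U i e y) A = subst U (nielsen_aut i e y A).
Proof.
apply: (freegrp_hom_ext (h1 := subst (nielsen_update U i e y))
                        (h2 := hcomp (subst U) (nielsen_aut i e y))) => k.
change (subst (nielsen_update U i e y) (gen k) = subst U (nielsen_aut i e y (gen k))).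
rewrite /nielsen_aut !subst_gen subst_fcls /nielsen_update /update /nielsen_gens.
have [_|_] := eqVneq k i; last by rewrite /subst_word /= cats0.
case: e; rewrite /subst_word /= cats0; last exact: fcls_red.
by rewrite fcls_winv fcls_red -fcls_winv winv_cat limg_flip /limg /= winvK.
Qed.

End ElementaryAutomorphism.

Definition kills_basis_element U :=
  exists2 alpha : hom F F, bijective alpha & exists k, subst U (alpha (gen k)) = gone _.

Lemma nielsen_update_lt U i e y :
  nielsen_move U (i, e) y -> nielsen_lt (nielsen_update U i e y) U.
Proof.
case=> _ /=; set w := red _; set w' := if e then winv w else w => Hmv.
have Es : size w' = size w by rewrite /w'; case: (e); rewrite ?size_winv.
have Ew : half_weight w' = half_weight w by rewrite /w'; case: (e); rewrite ?half_weight_winv.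
have := sum_update size U i w'; have := sum_update (@half_weight m) U i w'.
rewrite /nielsen_lt /total_size /total_weight /nielsen_update -/w -/w' Es Ew.
move: Hmv; set a := size w; set b := half_weight w.
set S1 := \sum_(k < n) size _; set S2 := \sum_(k < n) half_weight _; lia.
Qed.

Lemma nielsen_update_reduced U i e y : (forall k, reduced (U k)) ->
  forall k, reduced (nielsen_update U i e y k).
Proof.
move=> U_reduced k; rewrite /nielsen_update /update.
by case: (k == i); case: e; rewrite ?reduced_winv ?reduced_red.
Qed.

Lemma nielsen_reduction U : (forall k, reduced (U k)) ->
  kills_basis_element U \/ injective (subst U).
Proof.
elim/nielsen_lt_ind: U => U IH U_reduced.
have [[k Ek]|U_nonempty] := classic (exists k, U k = [::]).
  left; exists (hid F); first by exists id.
  by exists k; have := subst_gen U k; rewrite Ek.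
have {}U_nonempty k : U k <> [::] by move=> Ek; apply: U_nonempty; exists k.
have [U_nielsen|notNR] := classic (nielsen_reduced U).
  by right; apply: nielsen_reduced_subst_inj.
have [[i e] [y Hmove]] := not_nielsen_reduced_move U_reduced U_nonempty notNR.
have y_neq : y.1 != i by rewrite eq_sym; case: Hmove.
have aut_bij : bijective (nielsen_aut i e y).
  by exists (nielsen_aut_inv i e y); [apply: nielsen_aut_invK | apply: nielsen_autK].
case: (IH _ (nielsen_update_lt Hmove) (nielsen_update_reduced i e y U_reduced))
  => [[alpha alpha_bij [k Hk]]|Hinj].
- left; exists (hcomp (nielsen_aut i e y) alpha); first exact: bij_comp.
  by exists k; rewrite -[hcomp _ _ _]/(nielsen_aut i e y (alpha (gen k))) -subst_nielsen_update.
- right => A B E; have autK := nielsen_autK e y_neq.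
  rewrite -(autK A) -(autK B); congr (nielsen_aut i e y _).
  by apply: Hinj; rewrite !subst_nielsen_update !autK.
Qed.

End NielsenReduction.

Lemma hom_subst_reduced n m (phi : hom (freegrp n) (freegrp m)) :
  exists2 U : 'I_n -> word 'I_m, forall k, reduced (U k) & forall A, subst U A = phi A.
Proof.
exists (fun i => red (Defs.repr (phi (gen i)))) => [k|]; first exact: reduced_red.
by apply: freegrp_hom_ext => i; rewrite subst_gen fcls_red /fcls Defs.reprK.
Qed.

Lemma freegrp_hom_inj_or_kills n m (phi : hom (freegrp n) (freegrp m)) :
  injective phi \/
  exists2 alpha : hom (freegrp n) (freegrp n), bijective alpha &
    exists k, phi (alpha (gen k)) = gone _.
Proof.
have [U U_reduced EU] := hom_subst_reduced phi.
case: (nielsen_reduction U_reduced) => [[alpha alpha_bij [k Hk]]|Hinj].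
- by right; exists alpha => //; exists k; rewrite -EU.
- by left => A B E; apply: Hinj; rewrite !EU.
Qed.

Section KillGenerator.
Variables (n : nat) (k : 'I_n.+1).
Local Notation F1 := (freegrp n.+1).
Local Notation F0 := (freegrp n).

Definition gen_proj : hom F1 F0 :=
  subst (fun j => if unlift k j is Some j' then [:: (j', false)] else [::]).
Definition gen_incl : hom F0 F1 := subst (fun j => [:: (lift k j, false)]).

Lemma gen_projK : cancel gen_incl gen_proj.
Proof.
apply: (freegrp_hom_ext (h1 := hcomp gen_proj gen_incl) (h2 := hid F0)) => j.
change (gen_proj (gen_incl (gen j)) = gen j).
by rewrite /gen_incl subst_gen subst_fcls /subst_word /= /limg /= liftK cats0.
Qed.

Section KilledGenerator.
Variables (K : group) (h : hom F1 K).
Hypothesis h_kills : h (gen k) = gone K.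

Lemma gen_incl_projK g : h (gen_incl (gen_proj g)) = h g.
Proof.
apply: (freegrp_hom_ext (h1 := hcomp h (hcomp gen_incl gen_proj)) (h2 := h)) => j.
change (h (gen_incl (gen_proj (gen j))) = h (gen j)).
rewrite /gen_proj subst_gen; case: unliftP => [j'|] ->.
- by rewrite /gen_incl -/(gen j') subst_gen.
- by rewrite h_kills; exact: hom1 (hcomp h gen_incl).
Qed.

End KilledGenerator.

Lemma mapping_torus_kill_gen (psi : hom F1 F1) : psi (gen k) = gone F1 ->
  isomorphic (mapping_torus psi)
             (mapping_torus (hcomp gen_proj (hcomp psi gen_incl))).
Proof.
move=> psi_kills.
have mt_kills := gen_incl_projK (mt_elt_kernel psi_kills : mt_elt_hom psi (gen k) = _).
apply: (mapping_torus_iso_of_maps (e1 := gen_proj) (e2 := gen_incl)) => [g|h|g|h].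
- by rewrite /= (gen_incl_projK psi_kills).
- exact: (esym (mt_kills _)).
- exact: mt_kills.
- by rewrite gen_projK.
Qed.

End KillGenerator.

Lemma mapping_torus_freegrp_inj n (phi : hom (freegrp n) (freegrp n)) :
  exists m (psi : hom (freegrp m) (freegrp m)),
    injective psi /\ isomorphic (mapping_torus phi) (mapping_torus psi).
Proof.
elim: n phi => [|n IH] phi.
  have [Hinj|[_ _ [[k k_lt0] _]]] := freegrp_hom_inj_or_kills phi; last by [].
  by exists 0, phi; split; last apply: isomorphic_refl.
have [Hinj|[alpha [ai aK Ka] [k Hk]]] := freegrp_hom_inj_or_kills phi.
  by exists n.+1, phi; split; last apply: isomorphic_refl.
pose psi := hcomp (hinv Ka aK) (hcomp phi alpha).
have I1 : isomorphic (mapping_torus phi) (mapping_torus psi).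
  apply: (mapping_torus_conj (e := hinv Ka aK)); first by exists alpha.
  by move=> g /=; rewrite Ka.
have psi_kills : psi (gen k) = gone _ by rewrite /= Hk; apply: (hom1 (hinv Ka aK)).
have [m [psi' [Hinj I3]]] := IH (hcomp (gen_proj k) (hcomp psi (gen_incl k))).
exists m, psi'; split => //.
exact: isomorphic_trans I1 (isomorphic_trans (mapping_torus_kill_gen psi_kills) I3).
Qed.

Theorem proposition0p1 (F : group) (phi : hom F F) :
  fg_free F ->
  exists (F1 : group) (psi : hom F1 F1),
    fg_free F1 /\ injective (hfun psi) /\
    isomorphic (mapping_torus phi) (mapping_torus psi).
Proof.
case=> n [e [ei eK Ke]].
pose phi0 := hcomp e (hcomp phi (hinv Ke eK)).
have I1 : isomorphic (mapping_torus phi) (mapping_torus phi0).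
  apply: (mapping_torus_conj (e := e)); first by exists ei.
  by move=> g /=; rewrite eK.
have [m [psi [Hinj I2]]] := mapping_torus_freegrp_inj phi0.
exists (freegrp m), psi; split; first by exists m; apply: isomorphic_refl.
by split => //; apply: isomorphic_trans I1 I2.
Qed.
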